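(* Let $n$ be even and let $T_n$ be a nearly regular tournament on $n$ vertices, i.e. every vertex has out-degree and in-degree in $\{\frac{n}{2}-1,\frac{n}{2}\}$. Then $SV(T_n)=\{v\in V(T_n): d^{+}(v)=\delta^{+}(T_n)\}$, where $\delta^{+}(T_n)$ is the minimum out-degree of $T_n$.
   Context: A tournament is an orientation of a complete graph. $N^{+}(v)$ is the set of out-neighbours of $v$ and $d^{+}(v)=|N^{+}(v)|$; $N^{+2}(v)$ is the set of vertices $w\notin N^{+}(v)\cup\{v\}$ such that $u\to w$ is an arc for some $u\in N^{+}(v)$. A Seymour vertex is a vertex $v$ with $|N^{+2}(v)|\ge|N^{+}(v)|$; $SV(D)$ denotes the set of Seymour vertices of $D$. *)

From mathcomp Require Import all_boot.
Set Implicit Arguments. Unset Strict Implicit. Unset Printing Implicit Defensive.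

Definition is_tournament (V : finType) (r : rel V) : Prop :=
  (forall v, ~~ r v v) /\ (forall u v, u != v -> (r u v (+) r v u)).

Definition outN (V : finType) (r : rel V) (v : V) : {set V} := [set u | r v u].
Definition inN (V : finType) (r : rel V) (v : V) : {set V} := [set u | r u v].

Definition out2N (V : finType) (r : rel V) (v : V) : {set V} :=
  [set w | (w \notin outN r v) && (w != v) &&
           [exists u, (u \in outN r v) && r u w]].

Definition SV (V : finType) (r : rel V) : {set V} :=
  [set v | #|outN r v| <= #|out2N r v|].

(* minimum out-degree delta^+ (with the convention #|V| = 0 for empty V) *)
Definition min_outdeg (V : finType) (r : rel V) : nat :=
  \big[minn/#|V|]_(v : V) #|outN r v|.

(* In a nearly regular tournament on n = 2k vertices every out-degree is k-1
   or k, and since the out-degrees sum to k(2k-1) some vertex has out-degree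
   k-1, so the minimum out-degree is k-1.  In any tournament N^{+2}(v) lies in
   N^-(v); a vertex of out-degree k has only k-1 in-neighbours and is not a
   Seymour vertex.  For v of out-degree k-1, an in-neighbour w outside
   N^{+2}(v) dominates v and all of N^+(v); two such vertices w1 -> w2 would
   give w1 out-degree at least k+1.  Hence |N^{+2}(v)| >= |N^-(v)| - 1 = k-1. *)
From mathcomp Require Import all_boot.
From mathcomp Require Import zify.
Set Implicit Arguments. Unset Strict Implicit.

Lemma min_outdeg_le (V : finType) (r : rel V) (v : V) :
  min_outdeg r <= #|outN r v|.
Proof.
rewrite /min_outdeg; have : v \in index_enum V by rewrite mem_index_enum.
elim: (index_enum V) => [//|u s IHs]; rewrite inE big_cons.
case/orP=> [/eqP<-|/IHs]; first exact: geq_minl.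
exact: leq_trans (geq_minr _ _).
Qed.

Lemma min_outdeg_eq (V : finType) (r : rel V) (v0 : V) (m : nat) :
  (forall v, m <= #|outN r v|) -> #|outN r v0| = m -> min_outdeg r = m.
Proof.
move=> ge_m out_v0; apply/eqP; rewrite eqn_leq -{1}out_v0 min_outdeg_le.
apply: (big_ind (fun x => m <= x)) => [|x y hx hy|v _].
- by rewrite -out_v0 max_card.
- by rewrite leq_min hx hy.
- exact: ge_m.
Qed.

Lemma sum_outdeg_indeg (V : finType) (r : rel V) :
  \sum_v #|outN r v| = \sum_v #|inN r v|.
Proof.
have card_arcs (P : pred V) : #|[set u | P u]| = \sum_u (P u : nat).
  by rewrite -sum1_card big_mkcond; apply: eq_bigr => u _; rewrite inE; case: (P u).
rewrite /outN /inN.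
under eq_bigr => v _ do rewrite card_arcs.
under [RHS]eq_bigr => v _ do rewrite card_arcs.
by rewrite exchange_big.
Qed.

Section Tournament.
Variables (V : finType) (r : rel V).
Hypothesis tour : is_tournament r.

Lemma tournament_irrefl v : r v v = false.
Proof. exact: negbTE (tour.1 v). Qed.

Lemma tournament_asym a b : r a b -> r b a = false.
Proof.
move=> rab; case: (eqVneq a b) => [eab|nab].
  by move: rab; rewrite eab tournament_irrefl.
by move: (tour.2 _ _ nab); rewrite rab; case: (r b a).
Qed.

Lemma tournament_total a b : a != b -> ~~ r a b -> r b a.
Proof. by move=> nab; move: (tour.2 _ _ nab); case: (r a b); case: (r b a). Qed.

Lemma outdeg_add_indeg v : #|outN r v| + #|inN r v| = #|V|.-1.
Proof.
have arc_xor u : u != v -> r v u (+) r u v by rewrite eq_sym; apply: tour.2.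
rewrite -cardsUI -(cardsC1 v).
have -> : outN r v :&: inN r v = set0.
  apply/setP=> u; rewrite !inE; case: (eqVneq u v) => [->|/arc_xor].
    by rewrite tournament_irrefl.
  by case: (r v u); case: (r u v).
rewrite cards0 addn0; apply: eq_card => u; rewrite !inE.
case: (eqVneq u v) => [->|/arc_xor]; first by rewrite tournament_irrefl.
by case: (r v u); case: (r u v).
Qed.

Lemma sum_outdeg_double : (\sum_v #|outN r v|).*2 = #|V| * #|V|.-1.
Proof.
rewrite -addnn {2}sum_outdeg_indeg -big_split /=.
under eq_bigr => v _ do rewrite outdeg_add_indeg.
by rewrite sum_nat_const cardE.
Qed.

Lemma exists_outdeg_lt_half :
  0 < #|V| -> ~~ odd #|V| -> exists v, #|outN r v| < #|V|./2.
Proof.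
move=> V_gt0 V_even; apply/existsP; apply: contraT.
rewrite negb_exists => /forallP outdeg_ge.
have half_le v : #|V|./2 <= #|outN r v| by rewrite leqNgt outdeg_ge.
have : \sum_(v : V) #|V|./2 <= \sum_v #|outN r v| by apply: leq_sum => v _.
rewrite sum_nat_const.
have := sum_outdeg_double.
have := odd_double_half #|V|; rewrite (negbTE V_even).
set n := #|V|; set h := n./2; set S := \sum_v _; nia.
Qed.

Lemma out2N_subset_inN v : out2N r v \subset inN r v.
Proof.
apply/subsetP=> w; rewrite !inE => /andP[/andP[notout nwv] _].
by rewrite eq_sym in nwv; apply: tournament_total.
Qed.

Lemma dominates_notin_out2N v w :
  w \in inN r v -> w \notin out2N r v -> v |: outN r v \subset outN r w.
Proof.
rewrite !inE => rwv w_out2; apply/subsetP=> u; rewrite !inE.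
case/orP=> [/eqP-> //|rvu].
have nwv : w != v by apply: contraTneq rwv => ->; rewrite tournament_irrefl.
have nuw : u != w by apply: contraTneq rvu => ->; rewrite tournament_asym.
apply: tournament_total nuw _; apply: contra w_out2 => ruw.
rewrite tournament_asym //= nwv; apply/existsP; exists u.
by rewrite inE rvu.
Qed.

Lemma card_inN_le_out2N v :
  (forall u, #|outN r u| <= #|outN r v| + 1) ->
  #|inN r v| <= #|out2N r v| + 1.
Proof.
move=> outdeg_le.
rewrite -(cardsID (out2N r v) (inN r v)).
rewrite (setIidPr (out2N_subset_inN v)) leq_add2l leqNgt.
apply/negP=> /card_gt1P[w1 [w2 [/setDP[in1 nout1] /setDP[in2 nout2] n12]]].
wlog r12 : w1 w2 in1 nout1 in2 nout2 n12 / r w1 w2.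
  move=> W; case r12: (r w1 w2); first exact: (W w1 w2).
  apply: (W w2 w1) => //; first by rewrite eq_sym.
  by rewrite tournament_total // r12.
have sub : w2 |: (v |: outN r v) \subset outN r w1.
  by rewrite subUset sub1set inE r12 dominates_notin_out2N.
have w2_notin : w2 \notin v |: outN r v.
  move: in2; rewrite !inE => rw2v.
  by rewrite tournament_asym // orbF; apply: contraTneq rw2v => ->; rewrite tournament_irrefl.
have v_notin : v \notin outN r v by rewrite inE tournament_irrefl.
have := subset_leq_card sub; rewrite cardsU1 w2_notin cardsU1 v_notin.
by have := outdeg_le w1; lia.
Qed.

End Tournament.

Theorem mainTheorem4 (V : finType) (r : rel V)
  (Ht : is_tournament r)
  (Heven : ~~ odd #|V|)
  (Hnr : forall v : V,
     #|outN r v| \in [:: (#|V|./2).-1; #|V|./2] /\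
     #|inN r v| \in [:: (#|V|./2).-1; #|V|./2]) :
  SV r = [set v | #|outN r v| == min_outdeg r].
Proof.
set k := #|V|./2 in Hnr.
have outdeg_cases v : #|outN r v| = k.-1 \/ #|outN r v| = k.
  by case: (Hnr v) => /[!inE] /orP[] /eqP ? _; [left | right].
apply/setP=> v; rewrite /SV !inE.
have V_gt0 : 0 < #|V| by apply/card_gt0P; exists v.
have [v0 lt_v0] := exists_outdeg_lt_half Ht V_gt0 Heven.
have min_eq : min_outdeg r = k.-1.
  apply: (min_outdeg_eq (v0 := v0)) => [u|]; first by case: (outdeg_cases u) => ->; lia.
  by case: (outdeg_cases v0) lt_v0 => ->; lia.
have deg_v := outdeg_add_indeg Ht v.
have out2_le_in := subset_leq_card (out2N_subset_inN Ht v).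
rewrite min_eq; case: (outdeg_cases v) => outdeg_v; rewrite outdeg_v.
- have outdeg_le u : #|outN r u| <= #|outN r v| + 1.
    by rewrite outdeg_v; case: (outdeg_cases u) => ->; lia.
  by have := card_inN_le_out2N Ht outdeg_le; lia.
- lia.
Qed.
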